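(* Let $\mathcal{D}$ be a dyadic grid, $f\in L^2(\mathbb{R}^d)$ and $j\in\mathbb{N}_0$. For all $x\in\mathbb{R}^d$, \[ S_j^{\mathcal{D}}f(x)\le S_j^{3\mathcal{D}}f(x)\le 3^{d/2}S_j^{\mathcal{D}}f(x), \] where \[ \big(S_j^{\mathcal{D}}f(x)\big)^2=\sum_{Q\in\mathcal{D}}\sum_{\substack{P\in\mathcal{D},\,P\subset Q\\ \ell P=2^{-j}\ell Q}}\frac{\langle f,h_P\rangle^2}{|P|}\mathbf{1}_P(x),\qquad \big(S_j^{3\mathcal{D}}f(x)\big)^2=\sum_{R\in\mathcal{D}}\sum_{\substack{P\in\mathcal{D},\,P\subset 3R\\ \ell P=2^{-j}\ell R}}\frac{\langle f,h_P\rangle^2}{|P|}\mathbf{1}_P(x). \]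
   Context: A dyadic grid is the standard grid $\bigcup_j\{2^{-j}([0,1)^d+m):m\in\mathbb{Z}^d\}$ or a translate of it by $\omega\in(\{0,1\}^d)^{\mathbb{Z}}$. $3R$ is the cube concentric with $R$ of side $3\ell R$. For a dyadic cube $P=P_1\times\dots\times P_d$, the Haar functions are $h_P^\epsilon=\prod_ih_{P_i}^{\epsilon_i}$, $\epsilon\in\{0,1\}^d\setminus\{0\}^d$, where $h_I^0=|I|^{-1/2}\mathbf{1}_I$, $h_I^1=|I|^{-1/2}(\mathbf{1}_{I^-}-\mathbf{1}_{I^+})$; $\langle f,h_P\rangle^2:=\sum_\epsilon\langle f,h_P^\epsilon\rangle^2$. *)

From HB Require Import structures.
From mathcomp Require Import all_boot all_order all_algebra.
From mathcomp Require Import all_classical all_reals all_analysis.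
Set Implicit Arguments. Unset Strict Implicit. Unset Printing Implicit Defensive.
Import Order.TTheory GRing.Theory Num.Theory.
Local Open Scope classical_set_scope.
Local Open Scope ring_scope.

Section Dyadic.
Variable R : realType.

(* Iterated one-dimensional Lebesgue integrals; for nonnegative measurable
   functions this is the integral against Lebesgue measure on R^d (Tonelli). *)
Fixpoint iint (n : nat) : (n.-tuple R -> \bar R) -> \bar R :=
  match n return (n.-tuple R -> \bar R) -> \bar R with
  | 0 => fun g => g [tuple]
  | n'.+1 => fun g =>
      (\int[@lebesgue_measure R]_(y in [set: R]) iint (fun t => g (cons_tuple y t)))%E
  end.

Variable d : nat.

Definition Lint (g : d.-tuple R -> R) : \bar R :=
  (iint (EFin \o g)^\+ - iint (EFin \o g)^\-)%E.

Definition inner (f g : d.-tuple R -> R) : \bar R := Lint (fun x => f x * g x).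

Definition L2 (f : d.-tuple R -> R) : Prop :=
  measurable_fun [set: d.-tuple R] f /\
  (iint (fun x => (f x ^+ 2)%:E) < +oo)%E.

Definition dshift := int -> 'I_d -> bool.

Definition side (k : int) : R := (2 : R) ^ (- k).

Definition offset (w : dshift) (k : int) (i : 'I_d) : R :=
  fine (\sum_(n <oo) (side (k + n.+1%:Z) * ((w (k + n.+1%:Z) i : nat)%:R))%:E)%E.

(* a cube of D^w is indexed by its generation k and its integer position m:
   Q = 2^{-k}([0,1)^d + m) + sum_{i>k} 2^{-i} omega_i *)
Definition cidx := (int * d.-tuple int)%type.

Definition corner (w : dshift) (Q : cidx) (i : 'I_d) : R :=
  (tnth Q.2 i)%:~R * side Q.1 + offset w Q.1 i.

Definition cube (w : dshift) (Q : cidx) : set (d.-tuple R) :=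
  [set x | forall i, corner w Q i <= tnth x i < corner w Q i + side Q.1].

Definition cube3 (w : dshift) (Q : cidx) : set (d.-tuple R) :=
  [set x | forall i, corner w Q i - side Q.1 <= tnth x i
                     < corner w Q i + 2 * side Q.1].

Definition vol (Q : cidx) : R := side Q.1 ^+ d.

Definition haar1 (a l : R) (e : bool) (t : R) : R :=
  (Num.sqrt l)^-1 *
  (if e then
     (if (a <= t) && (t < a + l / 2) then 1
      else if (a + l / 2 <= t) && (t < a + l) then -1 else 0)
   else if (a <= t) && (t < a + l) then 1 else 0).

Definition haar (w : dshift) (P : cidx) (e : {ffun 'I_d -> bool})
  (x : d.-tuple R) : R :=
  \prod_(i < d) haar1 (corner w P i) (side P.1) (e i) (tnth x i).

(* <f, h_P>^2 = sum_{eps <> 0} <f, h_P^eps>^2 *)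
Definition coef2 (w : dshift) (f : d.-tuple R -> R) (P : cidx) : \bar R :=
  (\sum_(e : {ffun 'I_d -> bool} | e != [ffun => false])
      (inner f (haar w P e) * inner f (haar w P e)))%E.

Definition term (w : dshift) (f : d.-tuple R -> R) (P : cidx)
  (x : d.-tuple R) : \bar R :=
  (coef2 w f P * ((vol P)^-1)%:E * (\1_(cube w P) x)%:E)%E.

Definition Sj2 (w : dshift) (f : d.-tuple R -> R) (j : nat)
  (x : d.-tuple R) : \bar R :=
  \esum_(Q in [set: cidx])
    \esum_(P in [set P : cidx | cube w P `<=` cube w Q /\
                                side P.1 = 2 ^- j * side Q.1])
       term w f P x.

Definition S3j2 (w : dshift) (f : d.-tuple R -> R) (j : nat)
  (x : d.-tuple R) : \bar R :=
  \esum_(Q in [set: cidx])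
    \esum_(P in [set P : cidx | cube w P `<=` cube3 w Q /\
                                side P.1 = 2 ^- j * side Q.1])
       term w f P x.

Definition Sj w f j x : \bar R := sqrte (Sj2 w f j x).
Definition S3j w f j x : \bar R := sqrte (S3j2 w f j x).

End Dyadic.

(* Since R is contained in 3R, every term of the sum defining S_j^D also occurs
   in S_j^{3D}.  Conversely, a cube P of generation gen(R) + j lying in 3R is, by
   the nestedness of the dyadic grid, contained in one of the 3^d cubes of
   generation gen(R) that tile 3R.  Each of these is a translate of R by an
   integer vector in {-1,0,1}^d, and reindexing the sum over R along each
   translation gives (S_j^{3D})^2 <= 3^d (S_j^D)^2. *)

From HB Require Import structures.
From mathcomp Require Import all_boot all_order all_algebra.
From mathcomp Require Import all_classical all_reals all_analysis.
From mathcomp Require Import zify lra.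
Import Order.TTheory GRing.Theory Num.Theory.
Local Open Scope classical_set_scope.
Local Open Scope ring_scope.

Section Side.
Variable R : realType.

Lemma side_gt0 (k : int) : 0 < side R k.
Proof. by rewrite /side exprz_gt0. Qed.

Lemma side_succ (k : int) : side R k = 2 * side R (k + 1).
Proof.
rewrite /side (_ : - k = 1 + - (k + 1)); last by lia.
by rewrite expfzDr ?expr1z // pnatr_eq0.
Qed.

Lemma side_addn (k : int) (j : nat) : side R k = 2 ^+ j * side R (k + j%:Z).
Proof.
elim: j => [|j IH]; first by rewrite expr0 mul1r addr0.
rewrite IH (side_succ (k + j%:Z)) exprSr -mulrA.
by congr (_ * (_ * side R _)); lia.
Qed.

Lemma side_inj : injective (side R).
Proof.
move=> a b; rewrite /side => eab.
have : (2 : R) ^ (- a + a) = 2 ^ (- b + a) by rewrite !expfzDr ?pnatr_eq0 // eab.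
rewrite addNr expr0z => /esym/eqP; rewrite pexprz_eq1 ?ler0n //.
by rewrite pnatr_eq1 orbF => /eqP; lia.
Qed.

Lemma side_scaled_inj {a b : int} {j : nat} :
  side R a = 2 ^- j * side R b -> a = b + j%:Z.
Proof.
move=> eab; apply: side_inj.
by rewrite eab (side_addn b j) mulrA mulVf ?mul1r // expf_neq0 // pnatr_eq0.
Qed.

End Side.

Arguments side_scaled_inj {R a b j}.

Lemma int_in_three_blocks (J t m n : int) : 0 < J ->
  m * J + t - J <= n < m * J + t + 2 * J ->
  exists v : 'I_3, (m + v%:Z - 1) * J + t <= n < (m + v%:Z - 1) * J + t + J.
Proof.
move=> J_gt0 /andP[lo hi].
set q := ((n - t) %/ J)%Z.
have q_lo : q * J <= n - t by apply: lez_floor; lia.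
have q_hi : n - t < (q + 1) * J by apply: ltz_ceil.
have q_ge : m - 1 <= q.
  have : (m - 1) * J < (q + 1) * J by lia.
  by rewrite ltr_pM2r //; lia.
have q_le : q <= m + 1.
  have : q * J < (m + 2) * J by lia.
  by rewrite ltr_pM2r //; lia.
have v_lt3 : (absz (q - m + 1)%R < 3)%N by lia.
exists (Ordinal v_lt3) => /=.
have -> : m + (absz (q - m + 1))%:Z - 1 = q by lia.
lia.
Qed.

Definition neighbour {d : nat} (v : {ffun 'I_d -> 'I_3}) (Q : cidx d) : cidx d :=
  (Q.1, [tuple tnth Q.2 i + (v i)%:Z - 1 | i < d]).

Section Grid.
Context {R : realType} {d : nat} {w : dshift d}.

(* [fine] sends [+oo] to [0], so the recursion also holds if the series diverged. *)
Lemma offset_succ (k : int) (i : 'I_d) :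
  exists b : bool, offset R w k i = side R (k + 1) * (b : nat)%:R + offset R w (k + 1) i.
Proof.
rewrite /offset.
set a := fun (k : int) (n : nat) =>
  (side R (k + n.+1%:Z) * ((w (k + n.+1%:Z) i : nat)%:R))%:E.
have a_ge0 k' n : (0 <= a k' n)%E.
  by rewrite lee_fin mulr_ge0 ?ler0n // ltW // side_gt0.
have shift : (\sum_(1 <= n <oo) a k n = \sum_(n <oo) a (k + 1)%R n)%E.
  rewrite -nneseries_addn //; apply: eq_eseriesr => n _.
  by rewrite /a; congr (side R _ * (w _ i : nat)%:R)%:E; lia.
rewrite -/(a k) -/(a (k + 1)%R) (@nneseries_recl _ xpredT (a k)) // shift.
have : (0 <= \sum_(n <oo) a (k + 1)%R n)%E by apply: nneseries_ge0.
case: (\sum_(n <oo) a (k + 1)%R n)%E => [r||] //= _.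
- by exists (w (k + 1) i).
- by exists false; rewrite mulr0 add0r.
Qed.

Lemma offset_addn (k : int) (i : 'I_d) (j : nat) :
  exists t : int, offset R w k i = side R (k + j%:Z) * t%:~R + offset R w (k + j%:Z) i.
Proof.
elim: j => [|j [t IH]]; first by exists 0; rewrite mulr0 add0r addr0.
have [b hb] := offset_succ (k + j%:Z) i.
exists (2 * t + (b : nat)%:Z).
have -> : k + j.+1%:Z = k + j%:Z + 1 by lia.
rewrite IH hb (side_succ R (k + j%:Z)) intrD intrM /=.
have -> : ((b : nat)%:Z)%:~R = (b : nat)%:R :> R by [].
lra.
Qed.

Lemma lattice_addn (k : int) (i : 'I_d) (j : nat) : exists t : int, forall m : int,
  m%:~R * side R k + offset R w k i =
  (m * 2 ^+ j + t)%:~R * side R (k + j%:Z) + offset R w (k + j%:Z) i.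
Proof.
have [t ->] := offset_addn k i j; exists t => m.
by rewrite (side_addn R k j) intrD intrM rmorphXn /=; lra.
Qed.

Lemma lattice_in_three_blocks {s : R} {o : R} {J t m n : int} : 0 < s -> 0 < J ->
  let a := (m * J + t)%:~R * s + o in let L := J%:~R * s in let p := n%:~R * s + o in
  a - L <= p < a + 2 * L ->
  exists v : 'I_3, a + (v%:R - 1) * L <= p /\ p + s <= a + v%:R * L.
Proof.
move=> s_gt0 J_gt0 a L p.
have -> : a - L = (m * J + t - J)%:~R * s + o by rewrite /a /L !intrD; lra.
have -> : a + 2 * L = (m * J + t + 2 * J)%:~R * s + o by rewrite /a /L !intrD intrM; lra.
rewrite lerD2r ltrD2r ler_pM2r // ltr_pM2r // ler_int ltr_int.
move=> /(@int_in_three_blocks J t m n J_gt0) [v /andP[lo hi]]; exists v.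
have : ((m + v%:Z - 1) * J + t)%:~R * s <= n%:~R * s by rewrite ler_pM2r // ler_int.
have : (n + 1)%:~R * s <= ((m + v%:Z - 1) * J + t + J)%:~R * s.
  by rewrite ler_pM2r // ler_int; lia.
rewrite /a /L /p !(intrD, intrM, intrB) /=; split; lra.
Qed.

Lemma cube_sub_cube3 (Q : cidx d) : cube w Q `<=` cube3 (R:=R) w Q.
Proof.
move=> x xQ i; have := side_gt0 R Q.1.
by move: (xQ i) => /andP[lo hi] s_gt0; apply/andP; split; lra.
Qed.

Lemma cube_sub_neighbour {j : nat} {Q P : cidx d} : P.1 = Q.1 + j%:Z ->
  cube w P `<=` cube3 (R:=R) w Q ->
  exists v : {ffun 'I_d -> 'I_3}, cube w P `<=` cube (R:=R) w (neighbour v Q).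
Proof.
move=> genP PQ.
have cornerP : cube (R:=R) w P [tuple corner R w P i | i < d].
  by move=> i; rewrite tnth_mktuple lexx ltrDl side_gt0.
suff /choice [v vP] : forall i, exists v : 'I_3,
    let c := (tnth Q.2 i + v%:Z - 1)%:~R * side R Q.1 + offset R w Q.1 i in
    c <= corner R w P i /\ corner R w P i + side R P.1 <= c + side R Q.1.
  exists [ffun i => v i] => y yP i; have /andP[lo hi] := yP i; have [vlo vhi] := vP i.
  by rewrite /corner /= tnth_mktuple ffunE; apply/andP; split; lra.
move=> i; have [t Qi] := lattice_addn Q.1 i j.
have J_gt0 : 0 < (2 ^+ j : int) by rewrite exprn_gt0.
have sideQ : side R Q.1 = (2 ^+ j : int)%:~R * side R P.1.
  by rewrite (side_addn R Q.1 j) -genP rmorphXn.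
have cornerQ : corner R w Q i = (tnth Q.2 i * 2 ^+ j + t)%:~R * side R P.1 + offset R w P.1 i.
  by rewrite /corner Qi -genP.
have := PQ _ cornerP i; rewrite tnth_mktuple cornerQ sideQ.
move=> /(lattice_in_three_blocks (side_gt0 R P.1) J_gt0) [v [lo hi]]; exists v.
rewrite /corner sideQ in lo hi cornerQ *; rewrite !(intrD, intrB) /=; split; lra.
Qed.

Lemma neighbour_bij (v : {ffun 'I_d -> 'I_3}) :
  set_bij [set: cidx d] [set: cidx d] (neighbour v).
Proof.
rewrite setTT_bijective.
exists (fun Q => (Q.1, [tuple tnth Q.2 i - (v i)%:Z + 1 | i < d])) => -[k m];
  rewrite /neighbour /=; congr pair; apply: eq_from_tnth => i;
  rewrite !tnth_mktuple; lia.
Qed.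

End Grid.

Lemma le_esum_subset (R : realType) (T : choiceType) (A B : set T) (a : T -> \bar R) :
  A `<=` B -> (forall i, B i -> (0 <= a i)%E) ->
  (\esum_(i in A) a i <= \esum_(i in B) a i)%E.
Proof.
move=> AB a_ge0; rewrite (esum_mkcond A) (esum_mkcond B); apply: le_esum => i _.
have [iA|iA] := boolP (i \in A); first by rewrite ifT // inE; apply/AB/set_mem.
by case: ifPn => // /set_mem /a_ge0.
Qed.

Lemma powR_natr_half (R : realType) (a : R) (n : nat) :
  0 <= a -> a `^ (n%:R / 2) = Num.sqrt (a ^+ n).
Proof.
by move=> a_ge0; rewrite powRrM powR_mulrn // powR12_sqrt // exprn_ge0.
Qed.

Section SquareFunctions.
Context {R : realType} {d : nat}.
Variables (w : dshift d) (f : d.-tuple R -> R) (j : nat) (x : d.-tuple R).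

Lemma term_ge0 (P : cidx d) : (0 <= term w f P x)%E.
Proof.
have sqr_ge0 (e : \bar R) : (0 <= e * e)%E.
  by case: e => [r||] //=; rewrite lee_fin -expr2 sqr_ge0.
rewrite /term !mule_ge0 //; first exact: sume_ge0.
by rewrite lee_fin invr_ge0 exprn_ge0 // ltW // side_gt0.
Qed.

Definition descendants (Q : cidx d) : set (cidx d) :=
  [set P | cube (R:=R) w P `<=` cube w Q /\ side R P.1 = 2 ^- j * side R Q.1].

Definition descendants3 (Q : cidx d) : set (cidx d) :=
  [set P | cube (R:=R) w P `<=` cube3 w Q /\ side R P.1 = 2 ^- j * side R Q.1].

Lemma Sj2_le_S3j2 : (Sj2 w f j x <= S3j2 w f j x)%E.
Proof.
apply: le_esum => Q _; apply: le_esum_subset => [P [PQ sideP]|P _]; last exact: term_ge0.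
by split => //; apply: subset_trans PQ (@cube_sub_cube3 _ _ w Q).
Qed.

Lemma esum_descendants3_le (Q : cidx d) :
  (\esum_(P in descendants3 Q) term w f P x <=
   \sum_(v : {ffun 'I_d -> 'I_3}) \esum_(P in descendants (neighbour v Q)) term w f P x)%E.
Proof.
pose in_nb v P := if P \in descendants (neighbour v Q) then term w f P x else 0%E.
have in_nb_ge0 v P : (0 <= in_nb v P)%E by rewrite /in_nb; case: ifP => // _; exact: term_ge0.
apply: (@le_trans _ _ (\esum_(P in descendants3 Q) \sum_v in_nb v P)%E).
  apply: le_esum => P [PQ sideP].
  have [v Pv] := cube_sub_neighbour (side_scaled_inj sideP) PQ.
  rewrite (bigD1 v) //= /in_nb ifT; last by rewrite inE.
  by rewrite leeDl // sume_ge0 // => v' _; exact: in_nb_ge0.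
rewrite esum_sum //; apply: lee_sum => v _; rewrite [leRHS]esum_mkcond.
exact: le_esum_subset.
Qed.

Lemma S3j2_le_Sj2 : (S3j2 w f j x <= (3 ^ d)%:R%:E * Sj2 w f j x)%E.
Proof.
apply: le_trans (le_esum (fun Q _ => esum_descendants3_le Q)) _.
rewrite esum_sum; last by move=> Q v _ _; apply: esum_ge0 => P _; exact: term_ge0.
under eq_bigr => v _ do rewrite -(@reindex_esum R _ _ _ _ _
  (fun Q => \esum_(P in descendants Q) term w f P x)%E (neighbour_bij v)).
by rewrite sumr_const card_ffun !card_ord mule_natl.
Qed.

End SquareFunctions.

Theorem proposition8p2 (R : realType) (d : nat) (w : dshift d)
  (f : d.-tuple R -> R) (j : nat) :
  L2 f ->
  forall x : d.-tuple R,
    (Sj w f j x <= S3j w f j x)%E /\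
    (S3j w f j x <= ((3 : R) `^ (d%:R / 2))%:E * Sj w f j x)%E.
Proof.
(* The comparison is termwise. *)
move=> _ x; rewrite /Sj /S3j.
have Sj2_ge0 : (0 <= Sj2 w f j x)%E.
  by apply: esum_ge0 => Q _; apply: esum_ge0 => P _; exact: term_ge0.
have S3j2_ge0 := le_trans Sj2_ge0 (Sj2_le_S3j2 w f j x).
split; first by rewrite lee_sqrt // Sj2_le_S3j2.
by rewrite powR_natr_half // -natrX -(@sqrteM _ (3 ^ d)%:R%:E) ?lee_fin // lee_sqrt
  ?S3j2_le_Sj2 // mule_ge0.
Qed.
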